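(* For every integer $k \geq 1$, let $\mathcal{B}(k)$ denote the greatest common divisor of all the sums $\sum_{i=1}^{k} B_{n+i}$, $n \geq 0$. Then $$\mathcal{B}(k) = \begin{cases} \tfrac{1}{2}P_{k}, & \text{if } k \text{ is even};\\ Q_{k}, & \text{if } k \text{ is odd}.\end{cases}$$
   Context: The Pell sequence $(P_n)_{n\ge0}$ is defined by $P_0=0$, $P_1=1$, $P_n = 2P_{n-1}+P_{n-2}$. The associated Pell sequence $(Q_n)_{n\ge0}$ is defined by $Q_0=1$, $Q_1=1$, $Q_n=2Q_{n-1}+Q_{n-2}$. The balancing sequence $(B_n)_{n\ge0}$ is defined by $B_0=0$, $B_1=1$, $B_n=6B_{n-1}-B_{n-2}$. *)

From mathcomp Require Import all_boot.
Set Implicit Arguments. Unset Strict Implicit. Unset Printing Implicit Defensive.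

Fixpoint pell (n : nat) : nat :=
  match n with
  | 0 => 0
  | 1 => 1
  | (m.+1 as k).+1 => 2 * pell k + pell m
  end.

Fixpoint apell (n : nat) : nat :=
  match n with
  | 0 => 1
  | 1 => 1
  | (m.+1 as k).+1 => 2 * apell k + apell m
  end.

(* balancing numbers: B0=0, B1=1, B(n+2)=6B(n+1)-B n (always nonnegative, increasing) *)
Fixpoint bal (n : nat) : nat :=
  match n with
  | 0 => 0
  | 1 => 1
  | (m.+1 as k).+1 => 6 * bal k - bal m
  end.

Definition balsum (k n : nat) : nat := \sum_(1 <= i < k.+1) bal (n + i).

Definition is_gcd_family (f : nat -> nat) (g : nat) : Prop :=
  (forall n, g %| f n) /\ (forall d, (forall n, d %| f n) -> d %| g).

From mathcomp Require Import all_boot all_algebra zify ring.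
Import GRing.Theory.

(* Since 2 B_n = P_(2n) and P_(m+1) - P_(m-1) = 2 P_m, the sum telescopes:
   4 S_k(n) = P_(a+2k) - P_a with a = 2n+1.  The addition and subtraction
   formulas P_(m+-k) = P_m Q_k +- (-1)^k Q_m P_k turn this difference into
   2 Q_k P_(a+k) for odd k and 2 P_k Q_(a+k) for even k.  So every S_k(n) is
   the claimed number times a cofactor, and the cofactors for n = 0 and n = 1
   are coprime. *)

Lemma nat_ind2 (P : nat -> Prop) :
  P 0 -> P 1 -> (forall n, P n -> P n.+1 -> P n.+2) -> forall n, P n.
Proof.
move=> P0 P1 PSS n; suff: P n /\ P n.+1 by case.
by elim: n => [|n [Pn PSn]]; split=> //; apply: PSS.
Qed.

Lemma pellSS n : pell n.+2 = 2 * pell n.+1 + pell n. Proof. by []. Qed.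
Lemma apellSS n : apell n.+2 = 2 * apell n.+1 + apell n. Proof. by []. Qed.
Lemma balSS n : bal n.+2 = 6 * bal n.+1 - bal n. Proof. by []. Qed.

Lemma apell_add_pell n : apell n + pell n = pell n.+1.
Proof.
elim/nat_ind2: n => [//|//|n IHn IHSn].
by move: IHSn; rewrite apellSS !pellSS; lia.
Qed.

Lemma pell_add m r : pell (m + r) = pell m * apell r + apell m * pell r.
Proof.
elim/nat_ind2: r => [||r IHr IHSr].
- by rewrite addn0 /=; lia.
- by rewrite addn1 -apell_add_pell /=; lia.
by move: IHSr; rewrite !addnS !pellSS apellSS IHr; lia.
Qed.

Lemma odd_pell n : odd (pell n) = odd n.
Proof.
elim/nat_ind2: n => [//|//|n IHn _].
by rewrite pellSS oddD oddM /= IHn negbK.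
Qed.

Lemma odd_apell n : odd (apell n).
Proof.
elim/nat_ind2: n => [//|//|n IHn _].
by rewrite apellSS oddD oddM /= IHn.
Qed.

Lemma double_bal n : 2 * bal n = pell n.*2.
Proof.
elim/nat_ind2: n => [//|//|n IHn IHSn].
by move: IHSn; rewrite balSS !doubleS !pellSS; lia.
Qed.

Lemma balsum_telescope k n :
  4 * balsum k n + pell n.*2.+1 = pell (n.*2.+1 + k.*2).
Proof.
elim: k => [|k IHk]; first by rewrite /balsum big_geq // addn0.
rewrite /balsum big_nat_recr // -/(balsum k n) mulnDr -addnAC IHk.
rewrite doubleS !addnS !addSn pellSS.
have := double_bal (n + k.+1); rewrite doubleD doubleS !addnS.
lia.
Qed.

Section PellIdentitiesOverInt.
Local Open Scope ring_scope.

Lemma pellSSz n : (pell n.+2)%:Z = 2 * (pell n.+1)%:Z + (pell n)%:Z.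
Proof. by rewrite pellSS PoszD PoszM. Qed.

Lemma pell_dOcagne a r :
  (pell (a + r))%:Z * (pell r.+1)%:Z - (pell (a + r).+1)%:Z * (pell r)%:Z
  = (-1) ^+ r * (pell a)%:Z.
Proof.
elim: r => [|r IHr]; first by rewrite addn0 /=; ring.
by rewrite addnS !pellSSz exprS -mulrA -IHr; ring.
Qed.

Lemma pell_sub a k :
  (-1) ^+ k * (pell a)%:Z
  = (pell (a + k))%:Z * (apell k)%:Z - (apell (a + k))%:Z * (pell k)%:Z.
Proof.
have apellz j : (apell j)%:Z = (pell j.+1)%:Z - (pell j)%:Z.
  by rewrite -apell_add_pell PoszD; ring.
by rewrite -pell_dOcagne !apellz; ring.
Qed.

End PellIdentitiesOverInt.

Lemma double_balsum k n :
  2 * balsum k n = if odd k then pell (n.*2.+1 + k) * apell k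
                   else apell (n.*2.+1 + k) * pell k.
Proof.
set a := n.*2.+1.
have tele := balsum_telescope k n; rewrite -/a -addnn addnA in tele.
have add := pell_add (a + k) k.
have sub := pell_sub a k; rewrite -signr_odd in sub.
apply/eqP; rewrite -eqz_nat; apply/eqP.
case: (odd k) sub => sub; rewrite PoszM.
- by rewrite expr1 mulN1r in sub; lia.
- by rewrite expr0 mul1r in sub; lia.
Qed.

Definition balsum_cofactor k n :=
  if odd k then (pell (n.*2.+1 + k))./2 else apell (n.*2.+1 + k).

Lemma balsumE k n :
  balsum k n = (if odd k then apell k else (pell k)./2) * balsum_cofactor k n.
Proof.
have := double_balsum k n; rewrite /balsum_cofactor.
case odd_k: (odd k) => S2k.
- have : (pell (n.*2.+1 + k))./2.*2 = pell (n.*2.+1 + k).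
    by rewrite even_halfK // odd_pell oddD /= odd_double odd_k.
  rewrite -muln2; lia.
- have : (pell k)./2.*2 = pell k by rewrite even_halfK // odd_pell odd_k.
  rewrite -muln2; lia.
Qed.

Lemma coprime_rec_consecutive (a : nat) (x : nat -> nat) :
  (forall n, x n.+2 = a * x n.+1 + x n) -> coprime (x 0) (x 1) ->
  forall n, coprime (x n) (x n.+1).
Proof.
move=> xSS cop01; elim=> // n IHn.
by rewrite /coprime xSS gcdnMDl gcdnC.
Qed.

Lemma coprime_pellS n : coprime (pell n) (pell n.+1).
Proof. exact: coprime_rec_consecutive pellSS _ n. Qed.

Lemma coprime_apellS n : coprime (apell n) (apell n.+1).
Proof. exact: coprime_rec_consecutive apellSS _ n. Qed.

Lemma coprime_apellSS n : coprime (apell n) (apell n.+2).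
Proof.
rewrite apellSS addnC /coprime gcdnDl -/(coprime _ _).
by rewrite coprimeMr coprime_apellS coprimen2 odd_apell.
Qed.

(* The halves of P_n and P_(n+2) differ by P_(n+1), which is coprime to P_n. *)
Lemma coprime_half_pellSS n :
  ~~ odd n -> coprime (pell n)./2 (pell n.+2)./2.
Proof.
move=> even_n; have halfK_n : (pell n)./2.*2 = pell n.
  by rewrite even_halfK // odd_pell.
set h := (pell n)./2 in halfK_n *.
have -> : (pell n.+2)./2 = h + pell n.+1.
  by rewrite pellSS -halfK_n mul2n -doubleD doubleK addnC.
rewrite /coprime gcdnDl -/(coprime _ _).
apply: (coprime_dvdl _ (coprime_pellS n)).
by rewrite -halfK_n -muln2 dvdn_mulr.
Qed.

Lemma coprime_balsum_cofactor k :
  coprime (balsum_cofactor k 0) (balsum_cofactor k 1).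
Proof.
rewrite /balsum_cofactor !add1n; case: ifP => odd_k.
- by apply: coprime_half_pellSS; rewrite /= odd_k.
- exact: coprime_apellSS.
Qed.

Lemma is_gcd_family_mul (f c : nat -> nat) g i j :
  (forall n, f n = g * c n) -> coprime (c i) (c j) -> is_gcd_family f g.
Proof.
move=> fE cop_ij; split=> [n | d dvd_f]; first by rewrite fE dvdn_mulr.
have : d %| gcdn (f i) (f j) by rewrite dvdn_gcd !dvd_f.
by rewrite !fE -muln_gcdr (eqP cop_ij) muln1.
Qed.

Theorem theorem17 (k : nat) : 1 <= k ->
  is_gcd_family (balsum k) (if odd k then apell k else (pell k)./2).
Proof.
move=> _.
exact: is_gcd_family_mul (balsumE k) (coprime_balsum_cofactor k).
Qed.
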